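(* Let $\mathcal{X}=G^{\min}/P$ be the affine Grassmannian of the minimal affine Kac–Moody group $G^{\min}=\widehat{SL_2}$, with $P$ the standard maximal parabolic, and let $c^k_{n,m}\in\mathbb{Z}[\alpha_0,\alpha_1]$ be defined by $$\hat{\varepsilon}_n\cdot\hat{\varepsilon}_m=\sum_{k=\max\{n,m\}}^{n+m}c^k_{n,m}\,\hat{\varepsilon}_k\quad\text{in } H^\bullet_T(\mathcal{X}),$$ with $c^k_{n,m}=0$ for $k<\max\{n,m\}$ or $k>n+m$. Then for integers $1\le n\le m$ and $0\le i\le n$, $$c^{m+i}_{n,m}=\frac{1}{n!}\left[\frac{(m+i)!}{m!}\,Q^{n-i}_{m,i}-\sum_{k=\max\{i,1\}}^{n-1}k!\,Q^{n-k}_{1,k-1}\,c^{m+i}_{k,m}\right].$$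
   Context: $T$ is the adjoint torus of $\widehat{SL_2}$, and $H^\bullet_T(\mathrm{pt})$ is identified with the polynomial ring $\mathbb{Z}[\alpha_0,\alpha_1]$ in the simple roots (graded with $\alpha_0,\alpha_1$ in degree $1$); $c^k_{n,m}$ is homogeneous of degree $n+m-k$. $\{\hat{\varepsilon}_i\}_{i\ge0}$ is the $T$-equivariant Schubert basis of $H^\bullet_T(\mathcal{X})$ over $\mathbb{Z}[\alpha_0,\alpha_1]$ (Kumar's basis $\hat{\varepsilon}_{w_i}$), indexed by $w_i$, the alternating word of length $i$ in $s_0,s_1$ ending in $s_0$; $\hat\varepsilon_0=1$ and it satisfies the equivariant Chevalley formula $\hat{\varepsilon}_1\cdot\hat{\varepsilon}_m=q_m\hat{\varepsilon}_m+(m+1)\hat{\varepsilon}_{m+1}$, where $q_m:=\lceil m/2\rceil^2\alpha_0+(\lfloor m/2\rfloor^2+\lfloor m/2\rfloor)\alpha_1$. For $d\ge0$, $i\ge1$, $j\ge0$, $Q^d_{i,j}$ denotes the complete homogeneous symmetric polynomial of degree $d$ in $q_i,q_{i+1},\dots,q_{i+j}$, i.e. the sum of all monomials of degree $d$ in these $j+1$ variables ($Q^0_{i,j}=1$). *)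

From HB Require Import structures.
From mathcomp Require Import all_boot all_order all_algebra.
From mathcomp Require Import mpoly.
Set Implicit Arguments. Unset Strict Implicit. Unset Printing Implicit Defensive.
Import Order.TTheory GRing.Theory.
Local Open Scope ring_scope.

Notation HTpt := {mpoly int[2]}.
Definition alpha0 : HTpt := 'X_(0 : 'I_2).
Definition alpha1 : HTpt := 'X_(1 : 'I_2).

Definition qm (m : nat) : HTpt :=
  ((uphalf m) ^ 2)%N%:R * alpha0 + ((m./2) ^ 2 + m./2)%N%:R * alpha1.

Fixpoint hcomplete (d : nat) (s : seq HTpt) : HTpt :=
  match s with
  | [::] => (d == 0%N)%:R
  | x :: s' => \sum_(t < d.+1) x ^+ t * hcomplete (d - t) s'
  end.

(* Q^d_{i,j} = h_d(q_i, q_{i+1}, ..., q_{i+j}) *)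
Definition Qc (d i j : nat) : HTpt := hcomplete d [seq qm k | k <- iota i j.+1].

From HB Require Import structures.
From mathcomp Require Import all_boot all_order all_algebra.
From mathcomp Require Import mpoly.
From mathcomp Require Import ring zify.

Import GRing.Theory.
Local Open Scope ring_scope.

(* Iterating the Chevalley formula gives e_1^n e_m = sum_k f(n,m,k) e_k with
   f(n,m,m+j) = (m+j)!/m! Q^{n-j}_{m,j}: writing e_1^(n+1) e_m = e_1^n (e_1 e_m),
   f obeys f(n+1,m,-) = q_m f(n,m,-) + (m+1) f(n,m+1,-), which is the recursion
   of the complete homogeneous polynomials in their first variable.  Since q_0 = 0,
   the case m = 0 reads e_1^n = sum_{k=1}^n k! Q^{n-k}_{1,k-1} e_k.  Multiplying
   this by e_m and comparing coefficients of e_{m+i} with the first expansion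
   gives the formula; the terms with k < i vanish because m + k < m + i. *)

Lemma hcomplete0 s : hcomplete 0 s = 1.
Proof. by elim: s => //= x s IH; rewrite big_ord1 expr0 mul1r IH. Qed.

Lemma hcompleteS d x s :
  hcomplete d.+1 (x :: s) = hcomplete d.+1 s + x * hcomplete d (x :: s).
Proof.
rewrite /= big_ord_recl expr0 mul1r subn0 mulr_sumr.
by congr (_ + _); apply: eq_bigr => t _; rewrite exprS mulrA.
Qed.

Lemma hcomplete_cons0 d s : hcomplete d (0 :: s) = hcomplete d s.
Proof.
by elim: d => [|d IH]; rewrite ?hcomplete0 // hcompleteS mul0r addr0.
Qed.

Lemma qm0 : qm 0 = 0.
Proof. by rewrite /qm !mul0r addr0. Qed.

Lemma Qc_deg0 i j : Qc 0 i j = 1.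
Proof. exact: hcomplete0. Qed.

Lemma Qc_len1 d i : Qc d i 0 = qm i ^+ d.
Proof.
elim: d => [|d IH]; first exact: Qc_deg0.
by rewrite /Qc [LHS]hcompleteS add0r -/(Qc d i 0) IH exprS.
Qed.

Lemma QcSS d i j : Qc d.+1 i j.+1 = Qc d.+1 i.+1 j + qm i * Qc d i j.+1.
Proof. exact: hcompleteS. Qed.

Lemma Qc_from0 d j : Qc d 0 j.+1 = Qc d 1 j.
Proof. by rewrite /Qc [map _ _]/= qm0 hcomplete_cons0. Qed.

Definition e1pow_coef (n m k : nat) : HTpt :=
  if (m <= k <= m + n)%N then (k ^_ (k - m))%:R * Qc (n - (k - m)) m (k - m)
  else 0.

Lemma e1pow_coef_out n m k : ~~ (m <= k <= m + n)%N -> e1pow_coef n m k = 0.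
Proof. by move=> /negbTE out; rewrite /e1pow_coef out. Qed.

Lemma e1pow_coef_in n m j :
  (j <= n)%N -> e1pow_coef n m (m + j) = ((m + j) ^_ j)%:R * Qc (n - j) m j.
Proof. by move=> le_jn; rewrite /e1pow_coef addKn leq_addr leq_add2l le_jn. Qed.

Lemma e1pow_coefS n m k :
  e1pow_coef n.+1 m k = qm m * e1pow_coef n m k + m.+1%:R * e1pow_coef n m.+1 k.
Proof.
have [lt_km | /subnKC <-] := ltnP k m.
  by rewrite !e1pow_coef_out ?mulr0 ?addr0 //; lia.
case: (k - m)%N => [|j].
  rewrite !e1pow_coef_in // (e1pow_coef_out n m.+1); last by lia.
  by rewrite ffactn0 !mul1r !subn0 !Qc_len1 exprS mulr0 addr0.
have [lt_nj | le_jn] := ltnP n j.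
  by rewrite !e1pow_coef_out ?mulr0 ?addr0 //; lia.
rewrite (e1pow_coef_in n.+1) // -addSnnS (e1pow_coef_in n m.+1) // addSnnS subSS.
have ffact_split : ((m + j.+1) ^_ j.+1 = (m + j.+1) ^_ j * m.+1)%N.
  by rewrite ffactnSr; congr (_ * _); lia.
have [lt_jn | eq_jn] : (j < n)%N \/ j = n by lia.
  rewrite e1pow_coef_in // (_ : n - j = (n - j.+1).+1)%N; last by lia.
  by rewrite QcSS ffact_split natrM; ring.
rewrite e1pow_coef_out; last by lia.
by rewrite ffact_split natrM eq_jn subnn !Qc_deg0; ring.
Qed.

Lemma e1pow_coef00 n : (0 < n)%N -> e1pow_coef n 0 0 = 0.
Proof.
case: n => // n _; have := e1pow_coef_in n.+1 0 0 (leq0n _).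
by rewrite addn0 => ->; rewrite Qc_len1 qm0 expr0n mulr0.
Qed.

Lemma e1pow_coef0 n k :
  (0 < k <= n)%N -> e1pow_coef n 0 k = k`!%:R * Qc (n - k) 1 (k - 1).
Proof.
case: k => // k /= le_kn; have := e1pow_coef_in n 0 k.+1 le_kn.
by rewrite add0n => ->; rewrite ffactnn Qc_from0 subn1.
Qed.

Lemma sum_e1pow_coef0 n (b : nat -> HTpt) : (0 < n)%N ->
  \sum_(k < n.+1) e1pow_coef n 0 k * b k =
  n`!%:R * b n + \sum_(1 <= k < n) k`!%:R * Qc (n - k) 1 (k - 1) * b k.
Proof.
move=> n_gt0; rewrite -(big_mkord xpredT (fun k => e1pow_coef n 0 k * b k)).
rewrite big_nat_recr //= big_ltn // e1pow_coef00 // mul0r add0r addrC.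
rewrite e1pow_coef0 ?n_gt0 ?leqnn // subnn Qc_deg0 mulr1; congr (_ + _).
by apply: eq_big_nat => k lt_k; rewrite e1pow_coef0 //; lia.
Qed.

Section FiniteCombinations.
Context {R : pzRingType} {V : lmodType R} (e : nat -> V).

Lemma sum_scale_widen N M (a : nat -> R) : (N <= M)%N ->
    (forall k, (N <= k < M)%N -> a k = 0) ->
  \sum_(k < M) a k *: e k = \sum_(k < N) a k *: e k.
Proof.
move=> le_NM a0.
rewrite (big_ord_widen M (fun k => a k *: e k) le_NM) [RHS]big_mkcond.
apply: eq_bigr => k _; case: ifP => // /negbT; rewrite -leqNgt => le_Nk.
by rewrite a0 ?scale0r // le_Nk ltn_ord.
Qed.

Hypothesis e_free : forall N (a : nat -> R),
  \sum_(k < N) a k *: e k = 0 -> forall k, (k < N)%N -> a k = 0.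

Lemma sum_scale_inj N (a b : nat -> R) :
    \sum_(k < N) a k *: e k = \sum_(k < N) b k *: e k ->
  forall k, (k < N)%N -> a k = b k.
Proof.
move=> eq_ab k lt_kN; apply/eqP; rewrite -subr_eq0; apply/eqP.
apply: (e_free N (fun k => a k - b k)) lt_kN.
by under eq_bigr do rewrite scalerBl; rewrite sumrB eq_ab subrr.
Qed.

End FiniteCombinations.

Section SchubertExpansions.
Context {A : comAlgType HTpt} {e : nat -> A}.
Hypothesis chevalley : forall m, e 1%N * e m = qm m *: e m + m.+1%:R *: e m.+1.

Lemma e1pow_mul n m :
  e 1%N ^+ n * e m = \sum_(k < (m + n).+1) e1pow_coef n m k *: e k.
Proof.
elim: n m => [|n IH] m.
  rewrite expr0 mul1r addn0 big_ord_recr big1 => [|k _].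
    have := e1pow_coef_in 0 m 0 (leqnn 0); rewrite addn0 /= => ->.
    by rewrite ffactn0 Qc_deg0 mulr1 scale1r add0r.
  by rewrite e1pow_coef_out ?scale0r //=; have := ltn_ord k; lia.
rewrite exprS -mulrA mulrCA chevalley mulrDr -!scalerAr !IH addSnnS.
rewrite -(sum_scale_widen e (m + n).+1 (m + n.+1).+1 (e1pow_coef n m)); last 2 first.
- by lia.
- by move=> k lt_k; rewrite e1pow_coef_out //; lia.
rewrite !scaler_sumr -big_split /=; apply: eq_bigr => k _.
by rewrite !scalerA -scalerDl e1pow_coefS.
Qed.

Context {c : nat -> nat -> nat -> HTpt}.
Hypothesis c_def : forall n m,
  e n * e m = \sum_(maxn n m <= k < (n + m).+1) c k n m *: e k.
Hypothesis c_zero : forall k n m, (k < maxn n m)%N \/ (n + m < k)%N -> c k n m = 0.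

Lemma e_mul k m M :
  (k + m < M)%N -> e k * e m = \sum_(l < M) c l k m *: e l.
Proof.
move=> lt_M.
rewrite (sum_scale_widen e (k + m).+1 M (fun l => c l k m)) // => [|l /andP[lt_l _]].
  have le_max : (maxn k m <= (k + m).+1)%N by lia.
  rewrite c_def -(big_mkord xpredT (fun l => c l k m *: e l)).
  rewrite [RHS](big_cat_nat (leq0n _) le_max) /= [X in _ = X + _]big1_seq ?add0r //.
  move=> l /andP[_]; rewrite mem_index_iota => lt_l.
  by rewrite c_zero ?scale0r //; left; lia.
by rewrite c_zero ?scale0r //; right; lia.
Qed.

Lemma sum_e_mul N (a : nat -> HTpt) m :
  (\sum_(k < N.+1) a k *: e k) * e m =
  \sum_(l < (N + m).+1) (\sum_(k < N.+1) a k * c l k m) *: e l.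
Proof.
rewrite mulr_suml (eq_bigr (fun k : 'I_N.+1 =>
  \sum_(l < (N + m).+1) (a k * c l k m) *: e l)) => [|k _].
  by rewrite exchange_big; apply: eq_bigr => l _; rewrite scaler_suml.
rewrite -scalerAl (e_mul k m (N + m).+1) ?scaler_sumr; last by have := ltn_ord k; lia.
by apply: eq_bigr => l _; rewrite scalerA.
Qed.

Hypothesis e0 : e 0%N = 1.
Hypothesis e_free : forall N (a : nat -> HTpt),
  \sum_(k < N) a k *: e k = 0 -> forall k, (k < N)%N -> a k = 0.

Lemma e1pow_coef_convolution n m l : (l <= m + n)%N ->
  e1pow_coef n m l = \sum_(k < n.+1) e1pow_coef n 0 k * c l k m.
Proof.
move=> le_l.
pose conv l := \sum_(k < n.+1) e1pow_coef n 0 k * c l k m.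
apply: (sum_scale_inj e e_free (m + n).+1 (e1pow_coef n m) conv) le_l.
have e1pow : e 1%N ^+ n = \sum_(k < n.+1) e1pow_coef n 0 k *: e k.
  by rewrite -[LHS]mulr1 -e0 e1pow_mul add0n.
by rewrite -e1pow_mul e1pow sum_e_mul addnC.
Qed.

End SchubertExpansions.

Theorem proposition6p2
  (A : comAlgType HTpt) (e : nat -> A) (c : nat -> nat -> nat -> HTpt)
  (e_indep : forall (N : nat) (a : nat -> HTpt),
      \sum_(k < N) a k *: e k = 0 -> forall k, (k < N)%N -> a k = 0)
  (e_span : forall x : A, exists (N : nat) (a : nat -> HTpt),
      x = \sum_(k < N) a k *: e k)
  (e0 : e 0%N = 1)
  (chevalley : forall m, e 1%N * e m = qm m *: e m + (m.+1)%:R *: e m.+1)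
  (c_def : forall n m,
      e n * e m = \sum_(maxn n m <= k < (n + m).+1) c k n m *: e k)
  (c_zero : forall k n m, (k < maxn n m)%N \/ (n + m < k)%N -> c k n m = 0)
  (n m i : nat) (h1n : (1 <= n)%N) (hnm : (n <= m)%N) (hin : (i <= n)%N) :
  (n`!)%:R * c (m + i)%N n m =
    ((m + i)`! %/ m`!)%:R * Qc (n - i) m i
    - \sum_(maxn i 1 <= k < n) (k`!)%:R * Qc (n - k) 1 (k - 1) * c (m + i)%N k m.
Proof.
have le_mi : (m + i <= m + n)%N by rewrite leq_add2l.
have := e1pow_coef_convolution chevalley c_def c_zero e0 e_indep n m (m + i) le_mi.
rewrite e1pow_coef_in // (sum_e1pow_coef0 n (fun k => c (m + i)%N k m)) // => conv.
have -> : ((m + i)`! %/ m`! = (m + i) ^_ i)%N by rewrite ffact_factd ?addnK ?leq_addl.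
have /andP[le_1i le_in] : (1 <= maxn i 1 <= n)%N by lia.
rewrite conv (big_cat_nat le_1i le_in) /= big1_seq ?add0r ?addrK //.
move=> k /andP[_]; rewrite mem_index_iota => lt_k.
by rewrite c_zero ?mulr0 //; right; lia.
Qed.
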